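(* Fix $k\in[n]$ and vectors $\delta_i\in\mathbb{R}^n$ for $i\neq k$. Let $(W,P)$ be the stable point for the positions $M+\Delta_0$, where $\Delta_0e_i=\delta_i$ for $i\ne k$ and $\Delta_0e_k=0$, and let $(W',P')$ be the stable point for $M+\Delta_1$, where $\Delta_1e_i=\delta_i$ for $i\neq k$ and $\Delta_1e_k=\delta_k\in\mathbb{R}^n$. Let $\Gamma^{-1/2}\Sigma\Gamma^{-1/2}=V\Lambda V^T$ be an eigendecomposition with $V$ orthogonal and $\Lambda=\mathrm{diag}(\lambda_1,\dots,\lambda_n)$, $\lambda_i>0$. Define the symmetric matrix $A\in\mathbb{R}^{n\times n}$ by $$A_{ii}=\frac{V_{ki}^2}{4\lambda_i}+\sum_{\ell=1}^n\frac{V_{k\ell}^2}{2(\lambda_i+\lambda_\ell)},\qquad A_{ij}=\frac{V_{ki}V_{kj}}{2(\lambda_i+\lambda_j)}\ (i\neq j),$$ and $B=\gamma_k^{-1}\Gamma^{-1/2}VAV^T\Gamma^{-1/2}$. Then $W'e_k=We_k+B\delta_k$.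
   Context: Fix agents $[n]=\{1,\dots,n\}$. Let $\Sigma\in\mathbb{R}^{n\times n}$ be symmetric positive definite, $\Gamma=\mathrm{diag}(\gamma_1,\dots,\gamma_n)$ with all $\gamma_i>0$, and let $M\in\mathbb{R}^{n\times n}$ be the matrix of true beliefs. For a matrix of reported negotiating positions $M'\in\mathbb{R}^{n\times n}$, the stable point for $M'$ is the unique pair $(W,P)$ of real $n\times n$ matrices with $W=W^T$, $P^T=-P$ and $M'-P=2\Sigma W\Gamma$; equivalently $\mathrm{vec}(W)=\tfrac12(\Gamma\otimes\Sigma+\Sigma\otimes\Gamma)^{-1}\mathrm{vec}(M'+M'^T)$ and $P=M'-2\Sigma W\Gamma$. Here $\mathrm{vec}$ stacks columns and $e_i$ is the $i$-th standard basis vector. *)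

From HB Require Import structures.
From mathcomp Require Import all_boot all_order all_algebra.
Set Implicit Arguments. Unset Strict Implicit. Unset Printing Implicit Defensive.
Import Order.TTheory GRing.Theory Num.Theory.
Local Open Scope ring_scope.

Definition spd (R : realFieldType) (n : nat) (S : 'M[R]_n) : Prop :=
  S^T = S /\ forall x : 'cV[R]_n, x != 0 -> 0 < (x^T *m S *m x) 0 0.

Definition diagm (R : ringType) (n : nat) (g : 'I_n -> R) : 'M[R]_n :=
  diag_mx (\row_i g i).

Definition diag_invsqrt (R : rcfType) (n : nat) (g : 'I_n -> R) : 'M[R]_n :=
  diag_mx (\row_i (Num.sqrt (g i))^-1).

Definition stable_point (R : ringType) (n : nat) (Sigma Gamma M' W P : 'M[R]_n) : Prop :=
  W^T = W /\ P^T = - P /\ M' - P = 2%:R *: (Sigma *m W *m Gamma).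

Definition Delta0 (R : ringType) (n : nat) (k : 'I_n) (delta : 'I_n -> 'cV[R]_n) : 'M[R]_n :=
  \matrix_(a < n, i < n) (if i == k then 0 else delta i a ord0).

Definition Delta1 (R : ringType) (n : nat) (delta : 'I_n -> 'cV[R]_n) : 'M[R]_n :=
  \matrix_(a < n, i < n) delta i a ord0.

Definition Amat (R : fieldType) (n : nat) (k : 'I_n) (V : 'M[R]_n) (lam : 'I_n -> R) : 'M[R]_n :=
  \matrix_(i < n, j < n)
    (if i == j then
       V k i ^+ 2 / (4%:R * lam i) + \sum_(l < n) V k l ^+ 2 / (2%:R * (lam i + lam l))
     else V k i * V k j / (2%:R * (lam i + lam j))).

From mathcomp Require Import all_boot all_order all_algebra.
From mathcomp Require Import ring.
Set Implicit Arguments. Unset Strict Implicit. Unset Printing Implicit Defensive.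
Import Order.TTheory GRing.Theory Num.Theory.
Local Open Scope ring_scope.

(* Subtracting the stable-point equations for the two reports and symmetrizing
   gives the Lyapunov equation D + D^T = 2 (Σ X Γ + Γ X Σ) for X = W' - W,
   where D = δ_k e_k^T.  With U = Γ^{1/2} V one has Σ = U Λ U^T and
   Γ U^{-T} = U, so congruence by U^{-1} diagonalizes it: Z = U^T X U solves
   Λ Z + Z Λ = (a b^T + b a^T) / 2 with b = V^T e_k and a = γ_k^{-1/2} U^{-1} δ_k,
   whence Z_ij = (a_i b_j + b_i a_j) / (2 (λ_i + λ_j)).  Finally
   X e_k = U^{-T} Z U^{-1} e_k = γ_k^{-1/2} U^{-T} Z b and Z b = A a. *)

Section StablePoint.
Variables (R : comNzRingType) (n : nat) (Sigma Gamma : 'M[R]_n).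
Hypotheses (Sigma_sym : Sigma^T = Sigma) (Gamma_sym : Gamma^T = Gamma).

Lemma stable_point_symmetrize M' W P :
  stable_point Sigma Gamma M' W P ->
  M' + M'^T = 2%:R *: (Sigma *m W *m Gamma + Gamma *m W *m Sigma).
Proof.
case=> W_sym [P_skew EW].
have -> : M' = P + 2%:R *: (Sigma *m W *m Gamma) by rewrite -EW addrC subrK.
rewrite linearD linearZ /= P_skew !trmx_mul Gamma_sym W_sym Sigma_sym mulmxA.
by rewrite addrACA subrr add0r scalerDr.
Qed.

Lemma stable_point_sub M1 M2 W1 P1 W2 P2 :
  stable_point Sigma Gamma M1 W1 P1 -> stable_point Sigma Gamma M2 W2 P2 ->
  (M2 - M1) + (M2 - M1)^T =
    2%:R *: (Sigma *m (W2 - W1) *m Gamma + Gamma *m (W2 - W1) *m Sigma).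
Proof.
move=> /stable_point_symmetrize E1 /stable_point_symmetrize E2.
rewrite linearB /= addrACA -opprD E1 E2 -scalerBr !(mulmxBr, mulmxBl).
by rewrite opprD addrACA.
Qed.

End StablePoint.

Lemma Delta1_sub_Delta0 (R : nzRingType) n k (delta : 'I_n -> 'cV[R]_n) :
  Delta1 delta - Delta0 k delta = delta k *m delta_mx 0 k.
Proof.
apply/matrixP=> a i; rewrite !mxE big_ord1 !mxE eqxx /=.
by case: eqVneq => [->|_]; rewrite ?mulr1 ?mulr0 ?subr0 ?subrr.
Qed.

Lemma congr_lyapunov (R : comNzRingType) n (S Ga L U Ui X : 'M[R]_n) :
  Ui *m U = 1%:M -> S = U *m L *m U^T -> Ga^T = Ga -> Ga *m Ui^T = U ->
  Ui *m (S *m X *m Ga + Ga *m X *m S) *m Ui^T =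
    L *m (U^T *m X *m U) + U^T *m X *m U *m L.
Proof.
move=> UiU -> Ga_sym GaUi.
have UiGa : Ui *m Ga = U^T by rewrite -GaUi trmx_mul trmxK Ga_sym.
have UtUi : U^T *m Ui^T = 1%:M by rewrite -trmx_mul UiU trmx1.
rewrite mulmxDr mulmxDl; congr (_ + _); rewrite !mulmxA.
  by rewrite UiU mul1mx -!mulmxA GaUi.
by rewrite UiGa -mulmxA UtUi mulmx1.
Qed.

Lemma mulmx_sym_rank1 (R : comNzRingType) n (Ui : 'M[R]_n) (x y : 'cV[R]_n) :
  Ui *m (x *m y^T + (x *m y^T)^T) *m Ui^T =
    Ui *m x *m (Ui *m y)^T + Ui *m y *m (Ui *m x)^T.
Proof. by rewrite !trmx_mul !trmxK mulmxDr mulmxDl !mulmxA. Qed.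

Definition diag_lyap_sol (R : fieldType) n (lam : 'I_n -> R) (C : 'M[R]_n) : 'M[R]_n :=
  \matrix_(i, j) (C i j / (lam i + lam j)).

Lemma diag_lyap_solP (R : fieldType) n (lam : 'I_n -> R) (Z C : 'M[R]_n) :
  (forall i j, lam i + lam j != 0) ->
  diagm lam *m Z + Z *m diagm lam = C -> Z = diag_lyap_sol lam C.
Proof.
move=> lam_neq0 <-; apply/matrixP=> i j.
by rewrite /diagm mul_diag_mx mul_mx_diag !mxE [lam i * _]mulrC -mulrDr mulfK.
Qed.

(* The extra diagonal term V_ki^2 / (4 λ_i) of A is the l = i case of the
   off-diagonal formula. *)
Lemma AmatE (R : fieldType) n k (V : 'M[R]_n) (lam : 'I_n -> R) :
  Amat k V lam =
    diag_mx (\row_i \sum_(l < n) V k l ^+ 2 / (2%:R * (lam i + lam l)))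
    + \matrix_(i, j) (V k i * V k j / (2%:R * (lam i + lam j))).
Proof.
apply/matrixP=> i j; rewrite !mxE.
case: eqVneq => [<-|_]; rewrite ?mulr1n ?mulr0n ?add0r //.
have -> : 2%:R * (lam i + lam i) = 4%:R * lam i :> R by ring.
by rewrite addrC -expr2.
Qed.

Lemma diag_lyap_sol_rank2 (R : numFieldType) n k (V : 'M[R]_n) (lam : 'I_n -> R)
    (a : 'cV[R]_n) :
  diag_lyap_sol lam (a *m row k V + (row k V)^T *m a^T) *m (row k V)^T =
    2%:R *: (Amat k V lam *m a).
Proof.
apply/colP=> i; rewrite AmatE mulmxDl mul_diag_mx !mxE mulr_suml -big_split mulr_sumr /=.
apply: eq_bigr => l _; rewrite !mxE !big_ord1 !mxE !invfM.
move: (lam i + lam l)^-1 => d.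
by field.
Qed.

Definition diag_sqrt (R : rcfType) n (g : 'I_n -> R) : 'M[R]_n :=
  diag_mx (\row_i Num.sqrt (g i)).

Section Whitening.
Variables (R : rcfType) (n : nat) (gamma : 'I_n -> R).
Hypothesis gamma_gt0 : forall i, 0 < gamma i.

Lemma diag_sqrtK : diag_sqrt gamma *m diag_invsqrt gamma = 1%:M.
Proof.
rewrite mulmx_diag; apply/matrixP=> i j; rewrite !mxE.
by rewrite mulfV // gt_eqF // sqrtr_gt0.
Qed.

Lemma diag_invsqrtK : diag_invsqrt gamma *m diag_sqrt gamma = 1%:M.
Proof. exact: mulmx1C diag_sqrtK. Qed.

Lemma diag_sqrt_sqr : diag_sqrt gamma *m diag_sqrt gamma = diagm gamma.
Proof.
rewrite mulmx_diag; apply/matrixP=> i j; rewrite !mxE -expr2 sqr_sqrtr //.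
exact: ltW.
Qed.

Lemma diag_invsqrt_delta k :
  diag_invsqrt gamma *m (delta_mx k 0 : 'cV[R]_n) =
    (Num.sqrt (gamma k))^-1 *: delta_mx k 0.
Proof.
apply/matrixP=> i j; rewrite mul_diag_mx !mxE (ord1 j) eqxx.
by case: eqVneq => [->|_]; rewrite ?andbT ?andbF ?mulr0 ?mulr1.
Qed.

Variables (Sigma V : 'M[R]_n) (lam : 'I_n -> R).
Hypotheses (V_orth : V *m V^T = 1%:M)
  (Sigma_whitened : diag_invsqrt gamma *m Sigma *m diag_invsqrt gamma =
                    V *m diagm lam *m V^T).

Let U := diag_sqrt gamma *m V.
Let Ui := V^T *m diag_invsqrt gamma.

Lemma whiten_mulVmx : Ui *m U = 1%:M.
Proof.
by rewrite /Ui /U mulmxA -(mulmxA V^T) diag_invsqrtK mulmx1 mulmx1C.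
Qed.

Lemma whiten_mulmxV : U *m Ui = 1%:M.
Proof. exact: mulmx1C whiten_mulVmx. Qed.

Lemma Sigma_factor : Sigma = U *m diagm lam *m U^T.
Proof.
have sqrt_sym : (diag_sqrt gamma)^T = diag_sqrt gamma by rewrite tr_diag_mx.
rewrite /U trmx_mul sqrt_sym.
have -> : diag_sqrt gamma *m V *m diagm lam *m (V^T *m diag_sqrt gamma) =
          diag_sqrt gamma *m (V *m diagm lam *m V^T) *m diag_sqrt gamma.
  by rewrite !mulmxA.
rewrite -Sigma_whitened !mulmxA diag_sqrtK mul1mx.
by rewrite -mulmxA diag_invsqrtK mulmx1.
Qed.

Lemma Gamma_whiten : diagm gamma *m Ui^T = U.
Proof.
have invsqrt_sym : (diag_invsqrt gamma)^T = diag_invsqrt gamma by rewrite tr_diag_mx.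
rewrite /Ui /U trmx_mul trmxK invsqrt_sym -diag_sqrt_sqr -mulmxA.
by rewrite (mulmxA (diag_sqrt gamma) (diag_invsqrt gamma)) diag_sqrtK mul1mx.
Qed.

Lemma whiten_delta k :
  Ui *m delta_mx k 0 = (Num.sqrt (gamma k))^-1 *: (row k V)^T.
Proof. by rewrite -mulmxA diag_invsqrt_delta -scalemxAr tr_row colE. Qed.

Lemma whiten_congrK X : Ui^T *m (U^T *m X *m U) *m Ui = X.
Proof.
rewrite -mulmxA -(mulmxA _ U) whiten_mulmxV mulmx1 mulmxA -trmx_mul.
by rewrite whiten_mulmxV trmx1 mul1mx.
Qed.

Lemma whiten_lyapunov X C :
  C = 2%:R *: (Sigma *m X *m diagm gamma + diagm gamma *m X *m Sigma) ->
  diagm lam *m (2%:R *: (U^T *m X *m U)) + 2%:R *: (U^T *m X *m U) *m diagm lam =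
    Ui *m C *m Ui^T.
Proof.
have Gamma_sym : (diagm gamma)^T = diagm gamma by rewrite tr_diag_mx.
move=> ->; rewrite -!scalemxAr -!scalemxAl -scalerDr.
by rewrite (congr_lyapunov _ whiten_mulVmx Sigma_factor Gamma_sym Gamma_whiten).
Qed.

End Whitening.

Theorem mainTheorem2 (R : rcfType) (n : nat) (Sigma : 'M[R]_n) (gamma : 'I_n -> R)
  (M : 'M[R]_n) (k : 'I_n) (delta : 'I_n -> 'cV[R]_n)
  (W P W' P' : 'M[R]_n) (V : 'M[R]_n) (lam : 'I_n -> R) :
  spd Sigma ->
  (forall i, 0 < gamma i) ->
  stable_point Sigma (diagm gamma) (M + Delta0 k delta) W P ->
  stable_point Sigma (diagm gamma) (M + Delta1 delta) W' P' ->
  V *m V^T = 1%:M ->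
  (forall i, 0 < lam i) ->
  diag_invsqrt gamma *m Sigma *m diag_invsqrt gamma = V *m diagm lam *m V^T ->
  col k W' = col k W
    + ((gamma k)^-1 *: (diag_invsqrt gamma *m V *m Amat k V lam *m V^T *m diag_invsqrt gamma))
      *m delta k.
Proof.
move=> [Sigma_sym _] gamma_gt0 sp0 sp1 V_orth lam_gt0 Sigma_whitened.
have Gamma_sym : (diagm gamma)^T = diagm gamma by rewrite tr_diag_mx.
have dW_sym := stable_point_sub Sigma_sym Gamma_sym sp0 sp1.
rewrite opprD addrACA subrr add0r Delta1_sub_Delta0 -trmx_delta in dW_sym.
set U := diag_sqrt gamma *m V; set Ui := V^T *m diag_invsqrt gamma.
set Z := U^T *m (W' - W) *m U.
set s := (Num.sqrt (gamma k))^-1; set a := s *: (Ui *m delta k).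
have Z2 : 2%:R *: Z = diag_lyap_sol lam (a *m row k V + (row k V)^T *m a^T).
  apply: diag_lyap_solP => [i j|]; first by rewrite gt_eqF ?addr_gt0.
  rewrite (whiten_lyapunov gamma_gt0 V_orth Sigma_whitened dW_sym) mulmx_sym_rank1.
  by rewrite whiten_delta /a !linearZ /= trmxK -!scalemxAl.
have Zb : Z *m (row k V)^T = Amat k V lam *m a.
  apply: (@scalerI _ _ 2%:R); first by rewrite pnatr_eq0.
  by rewrite scalemxAl Z2 diag_lyap_sol_rank2.
have UiT : Ui^T = diag_invsqrt gamma *m V by rewrite trmx_mul trmxK tr_diag_mx.
have ss : s * s = (gamma k)^-1 by rewrite -invfM -expr2 sqr_sqrtr // ltW.
rewrite -[W'](subrK W) !colE mulmxDl addrC; congr (_ + _).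
rewrite -(whiten_congrK gamma_gt0 V_orth (W' - W)) -/Z -/Ui -mulmxA whiten_delta.
rewrite -scalemxAr -(mulmxA Ui^T) Zb /a -!scalemxAr scalerA ss.
by rewrite -UiT -(mulmxA _ V^T) -scalemxAl !mulmxA.
Qed.
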